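(* Let $K$ be a field of characteristic $0$. Let $m=x_1^{\alpha_1}\cdots x_n^{\alpha_n}$ with $\alpha_i\ge1$ for all $i$, let $d=\alpha_1+\cdots+\alpha_n$, and let $f$ be in the orbit of $m$, i.e., $f(x)=m(A.x)$ for some $A\in GL_n(K)$. Then the centralizer $C(\mathfrak{g}_f)$ is of dimension $n$. Moreover, there is a unique $H\in C(\mathfrak{g}_f)$ such that $\mathrm{Tr}\,H=d$ and $\mathrm{Tr}(HM)=0$ for all $M\in\mathfrak{g}_f$. The matrix $H$ is diagonalizable, its eigenvalues are $(\alpha_1,\ldots,\alpha_n)$, and $C(\mathfrak{g}_f)=\mathfrak{g}_f\oplus\mathrm{Span}(H)$.
   Context: For $P\in K[x_1,\ldots,x_n]$, the Lie algebra $\mathfrak{g}_P$ of $P$ is the Lie algebra of the group of invariants $\{A\in GL_n(K): P(A.x)=P(x)\}$; equivalently, $\mathfrak{g}_P$ is the linear subspace of matrices $A=(a_{ij})\in M_n(K)$ such that $\sum_{i,j\in[n]} a_{ij}\,x_j\,\frac{\partial P}{\partial x_i}=0$. For a set $S\subseteq M_n(K)$, the centralizer $C(S)$ is the linear subspace of matrices commuting with every element of $S$. *)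

From mathcomp Require Import all_boot all_order all_algebra.
From mathcomp Require Export mpoly.
Set Implicit Arguments. Unset Strict Implicit. Unset Printing Implicit Defensive.
Import GRing.Theory.
Local Open Scope ring_scope.

Section LieAlg.
Variables (K : fieldType) (n : nat).

Definition lie_op (P : {mpoly K[n]}) (M : 'M[K]_n) : {mpoly K[n]} :=
  \sum_(i < n) \sum_(j < n) M i j *: ('X_j * P^`M(i)).

(* A finite list of monomials containing the support of every lie_op P M. *)
Definition lie_mons (P : {mpoly K[n]}) : seq 'X_{1..n} :=
  flatten [seq msupp ('X_ij.2 * P^`M(ij.1)) | ij <- enum {: 'I_n * 'I_n}].

Definition lie_coefs (P : {mpoly K[n]}) (v : 'rV[K]_(n * n))
  : 'rV[K]_(size (lie_mons P)) :=
  \row_(k < size (lie_mons P)) (lie_op P (vec_mx v))@_(nth 0%MM (lie_mons P) k).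

(* The Lie algebra g_P, as a subspace of M_n(K) encoded (mxalgebra style,
   rows = mxvec of matrices) : the kernel of the linear map lie_op P. *)
Definition lie_alg (P : {mpoly K[n]}) : 'M[K]_(n * n) :=
  kermx (lin1_mx (lie_coefs P)).

End LieAlg.

From HB Require Import structures.
From mathcomp Require Import all_boot all_order all_algebra.
From mathcomp Require Import mpoly.
From mathcomp Require Import ring zify.
Set Implicit Arguments.
Unset Strict Implicit.
Unset Printing Implicit Defensive.
Import GRing.Theory.
Local Open Scope ring_scope.

(* [lie_op P M] is the derivative of P along the linear vector field x |-> M x,
   so the chain rule gives g_(m o A) = A^-1 g_m A.  Comparing the coefficients
   of the monomials x^(alpha - e_i + e_j) shows that g_m consists of the
   diagonal matrices X with sum_i alpha_i X_ii = 0.  It contains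
   alpha_j E_ii - alpha_i E_jj, and as alpha_i + alpha_j <> 0 its centralizer
   is the n-dimensional algebra of diagonal matrices.  This algebra is
   g_m (+) K diag(alpha) since sum_i alpha_i^2 <> 0, and diag(alpha) is the
   only diagonal matrix of trace d orthogonal to g_m; H is its conjugate
   by A. *)

Section Substitution.
Variable R : comNzRingType.

Lemma comp_mpolyA n k l (p : {mpoly R[n]}) (t : n.-tuple {mpoly R[k]})
    (u : k.-tuple {mpoly R[l]}) :
  (p \mPo t) \mPo u = p \mPo [tuple tnth t i \mPo u | i < n].
Proof.
rewrite (comp_mpolyEX p t) (comp_mpolyEX p) raddf_sum; apply: eq_bigr => m _ /=.
rewrite comp_mpolyZ !comp_mpolyX rmorph_prod; congr (_ *: _).
by apply: eq_bigr => i _; rewrite rmorphXn tnth_mktuple.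
Qed.

Lemma monomial_ind n (P : {mpoly R[n]} -> Prop) :
  P 1 -> (forall i, P 'X_i) -> (forall p q, P p -> P q -> P (p * q)) ->
  forall m, P 'X_[m].
Proof.
move=> P1 PX PM m; rewrite mpolyXE_id; apply: (big_ind P) => // i _.
by elim: (m i) => [|k IH]; rewrite ?expr0 // exprS; apply: PM.
Qed.

Lemma mderivXU n i j : ('X_i : {mpoly R[n]})^`M(j) = (i == j)%:R.
Proof.
rewrite mderivX mnm1E; have [<-|_] := eqVneq i j; last by rewrite scale0r.
by rewrite -[X in (X - _)%MM]add0m addmK mpolyX0 scale1r.
Qed.

Lemma mderiv_comp n k (p : {mpoly R[n]}) (t : n.-tuple {mpoly R[k]}) j :
  (p \mPo t)^`M(j) = \sum_(i < n) (p^`M(i) \mPo t) * (tnth t i)^`M(j).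
Proof.
pose chain q :=
  (q \mPo t)^`M(j) = \sum_(i < n) (q^`M(i) \mPo t) * (tnth t i)^`M(j).
have chain_monomial m : chain 'X_[m].
  apply: monomial_ind => [|i|q1 q2 chain_q1 chain_q2].
  - rewrite /chain comp_mpoly1 -mpolyC1 mderivC big1 // => i _.
    by rewrite mderivC comp_mpolyC mul0r.
  - rewrite /chain comp_mpolyXU -tnth_nth (bigD1 i) //= big1 ?addr0 => [|l li].
      by rewrite mderivXU eqxx comp_mpoly1 mul1r.
    by rewrite mderivXU eq_sym (negbTE li) comp_mpoly0 mul0r.
  - rewrite /chain rmorphM mderivM chain_q1 chain_q2 mulr_suml mulr_sumr.
    rewrite -big_split; apply: eq_bigr => i _ /=.
    by rewrite mderivM rmorphD !rmorphM /=; ring.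
elim/mpolyind: p => [|c m p _ _ chain_p].
  rewrite comp_mpoly0 mderiv0 big1 // => i _.
  by rewrite mderiv0 comp_mpoly0 mul0r.
rewrite comp_mpolyD comp_mpolyZ mderivD mderivZ chain_monomial chain_p.
rewrite scaler_sumr -big_split; apply: eq_bigr => i _ /=.
by rewrite mderivD mderivZ comp_mpolyD comp_mpolyZ mulrDl scalerAl.
Qed.

Definition lin_forms n (A : 'M[R]_n) : n.-tuple {mpoly R[n]} :=
  [tuple \sum_(j < n) A i j *: 'X_j | i < n].

Lemma lin_formsM n (A B : 'M[R]_n) i :
  \sum_(j < n) A i j *: tnth (lin_forms B) j = tnth (lin_forms (A *m B)) i.
Proof.
rewrite tnth_mktuple; under eq_bigr do rewrite tnth_mktuple scaler_sumr.
rewrite exchange_big /=; apply: eq_bigr => l _.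
by rewrite mxE scaler_suml; apply: eq_bigr => j _; rewrite scalerA.
Qed.

Lemma comp_lin_forms n (A B : 'M[R]_n) i :
  tnth (lin_forms A) i \mPo lin_forms B = tnth (lin_forms (A *m B)) i.
Proof.
rewrite -lin_formsM {1}tnth_mktuple raddf_sum; apply: eq_bigr => j _ /=.
by rewrite comp_mpolyZ comp_mpolyXU -tnth_nth.
Qed.

Lemma lin_forms1 n : lin_forms (1%:M : 'M[R]_n) = [tuple 'X_i | i < n].
Proof.
apply: eq_from_tnth => i; rewrite !tnth_mktuple (bigD1 i) //= big1 => [|j ji].
  by rewrite mxE eqxx scale1r addr0.
by rewrite mxE eq_sym (negbTE ji) scale0r.
Qed.

Lemma comp_lin_formsK n (A B : 'M[R]_n) (p : {mpoly R[n]}) :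
  A *m B = 1%:M -> (p \mPo lin_forms A) \mPo lin_forms B = p.
Proof.
move=> AB; rewrite comp_mpolyA -[RHS]comp_mpoly_id -lin_forms1 -AB.
congr (_ \mPo _); apply: eq_from_tnth => i.
by rewrite tnth_mktuple comp_lin_forms.
Qed.

Lemma mderiv_lin_forms n (A : 'M[R]_n) i j :
  (tnth (lin_forms A) i)^`M(j) = (A i j)%:MP.
Proof.
rewrite tnth_mktuple raddf_sum (bigD1 j) //= big1 => [|l lj].
  by rewrite mderivZ mderivXU eqxx -mul_mpolyC mulr1 addr0.
by rewrite mderivZ mderivXU (negbTE lj) scaler0.
Qed.

End Substitution.

Section LieOperator.
Variables (K : fieldType) (n : nat).
Implicit Types (P p : {mpoly K[n]}) (A M N : 'M[K]_n).

Lemma lie_op_is_linear P : linear (lie_op P).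
Proof.
move=> a M N; rewrite /lie_op scaler_sumr -big_split; apply: eq_bigr => i _.
rewrite scaler_sumr -big_split; apply: eq_bigr => j _.
by rewrite !mxE scalerDl scalerA.
Qed.

Lemma lie_coefs_is_linear P : linear (lie_coefs P).
Proof.
move=> a u v; apply/rowP => k; rewrite !mxE linearP lie_op_is_linear.
by rewrite mcoeffD mcoeffZ.
Qed.

HB.instance Definition _ P := GRing.isLinear.Build K 'rV[K]_(n * n) _ _
  (lie_coefs P) (lie_coefs_is_linear P).

Lemma lie_algP P M : (M \in lie_alg P)%MS = (lie_op P M == 0).
Proof.
apply/sub_kermxP/eqP => [|lie0]; rewrite mul_rV_lin1 /=; last first.
  by apply/rowP => k; rewrite !mxE mxvecK lie0 mcoeff0.
move=> /rowP coefs0; apply/mpolyP => x; rewrite mcoeff0.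
have [x_mon|x_nmon] := boolP (x \in lie_mons P).
  have x_idx : (index x (lie_mons P) < size (lie_mons P))%N.
    by rewrite index_mem.
  by have := coefs0 (Ordinal x_idx); rewrite !mxE /= mxvecK nth_index.
rewrite /lie_op raddf_sum big1 // => i _; rewrite raddf_sum big1 // => j _.
rewrite /= mcoeffZ memN_msupp_eq0 ?mulr0 //; apply: contra x_nmon => x_supp.
by apply/flatten_mapP; exists (i, j); rewrite ?mem_enum.
Qed.

Lemma lie_opE P M : lie_op P M = \sum_(i < n) tnth (lin_forms M) i * P^`M(i).
Proof.
apply: eq_bigr => i _; rewrite tnth_mktuple mulr_suml.
by apply: eq_bigr => j _; rewrite -scalerAl.
Qed.

Lemma lie_op_comp p (t : n.-tuple {mpoly K[n]}) M :
  lie_op (p \mPo t) M = \sum_(i < n) (p^`M(i) \mPo t) * lie_op (tnth t i) M.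
Proof.
rewrite lie_opE; under eq_bigr do rewrite mderiv_comp mulr_sumr.
rewrite exchange_big; apply: eq_bigr => i _ /=.
by rewrite lie_opE mulr_sumr; apply: eq_bigr => j _; rewrite mulrCA.
Qed.

Lemma lie_op_lin_forms A M i :
  lie_op (tnth (lin_forms A) i) M = tnth (lin_forms (A *m M)) i.
Proof.
rewrite lie_opE -lin_formsM; apply: eq_bigr => j _.
by rewrite mderiv_lin_forms mulrC mul_mpolyC.
Qed.

Lemma lie_op_comp_lin_forms p A M N : N *m A = A *m M ->
  lie_op (p \mPo lin_forms A) M = lie_op p N \mPo lin_forms A.
Proof.
move=> NA; rewrite lie_op_comp lie_opE rmorph_sum; apply: eq_bigr => i _ /=.
by rewrite lie_op_lin_forms rmorphM /= comp_lin_forms NA mulrC.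
Qed.

Lemma lie_alg_comp_lin_forms p A M : A \in unitmx ->
  (M \in lie_alg (p \mPo lin_forms A))%MS = (lie_op p (conjmx A M) == 0).
Proof.
move=> A_unit; rewrite lie_algP (@lie_op_comp_lin_forms p A M (conjmx A M));
  last by rewrite conjumx // mulmxKV.
apply/eqP/eqP => [|->]; last exact: comp_mpoly0.
move/(congr1 (comp_mpoly (lin_forms (invmx A)))).
by rewrite comp_lin_formsK ?mulmxV // comp_mpoly0.
Qed.

End LieOperator.

Lemma mxtrace_mul_diag (R : comNzRingType) n (X : 'M[R]_n) (v : 'rV[R]_n) :
  \tr (X *m diag_mx v) = \sum_(i < n) X i i * v 0 i.
Proof. by apply: eq_bigr => i _; rewrite mul_mx_diag mxE. Qed.

Section Monomial.
Variables (K : fieldType) (n : nat) (alpha : 'I_n -> nat).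
Hypothesis char0 : [pchar K] =i pred0.
Hypothesis alpha_gt0 : forall i, (0 < alpha i)%N.
Let mono : 'X_{1..n} := [multinom alpha i | i < n].

Lemma shift_mono_id i : (U_(i) + (mono - U_(i)))%MM = mono.
Proof.
rewrite addmC submK //; apply/mnm_lepP => l.
by rewrite mnm1E mnmE; case: eqP => // ->.
Qed.

Lemma shift_mono_eq i j : ((U_(j) + (mono - U_(i)))%MM == mono) = (i == j).
Proof.
apply/eqP/eqP => [/mnmP/(_ i)|<-]; last exact: shift_mono_id.
rewrite mnmDE mnmBE !mnm1E !mnmE eqxx.
by have := alpha_gt0 i; case: (j =P i) => [-> _ _ //|_]; lia.
Qed.

Lemma shift_mono_inj i j k l : k != l ->
  ((U_(j) + (mono - U_(i)))%MM == (U_(l) + (mono - U_(k)))%MM) =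
  (i == k) && (j == l).
Proof.
move=> kl; apply/eqP/andP => [/mnmP eq_shift|[/eqP-> /eqP->] //].
move: (eq_shift k) (eq_shift l) (alpha_gt0 k) (alpha_gt0 l).
rewrite !mnmDE !mnmBE !mnm1E !mnmE !eqxx; move: kl.
by do ![case: eqP => // ?]; first [congruence | lia].
Qed.

Lemma mcoeff_lie_op_monomial (N : 'M[K]_n) x :
  (lie_op 'X_[mono] N)@_x = \sum_(i < n) \sum_(j < n)
     N i j * (alpha i)%:R * ((U_(j) + (mono - U_(i)))%MM == x)%:R.
Proof.
rewrite /lie_op raddf_sum; apply: eq_bigr => i _ /=.
rewrite raddf_sum; apply: eq_bigr => j _ /=.
by rewrite mderivX mnmE -scalerAr -mpolyXD !mcoeffZ mcoeffX mulrA.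
Qed.

Lemma lie_op_monomial_eq0 (N : 'M[K]_n) :
  (lie_op 'X_[mono] N == 0) =
  is_diag_mx N && (\tr (N *m diag_mx (\row_i (alpha i)%:R)) == 0).
Proof.
have alpha_neq0 i : (alpha i)%:R != 0 :> K.
  by rewrite (pcharf0P K).1 // -lt0n alpha_gt0.
rewrite mxtrace_mul_diag; under eq_bigr do rewrite mxE.
apply/eqP/andP => [lie0|[/is_diag_mxP N_diag /eqP trace0]]; last first.
  apply/mpolyP => x; rewrite mcoeff_lie_op_monomial mcoeff0.
  transitivity ((\sum_i N i i * (alpha i)%:R) * (mono == x)%:R); last first.
    by rewrite trace0 mul0r.
  rewrite mulr_suml; apply: eq_bigr => i _.
  rewrite (bigD1 i) //= big1 => [|j ji]; first by rewrite shift_mono_id addr0.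
  by rewrite N_diag ?mul0r // eq_sym.
have coef0 x := etrans (esym (mcoeff_lie_op_monomial N x)) (congr1 _ lie0).
split; last first.
  apply/eqP; rewrite -[RHS](mcoeff0 _ mono) -coef0; apply: eq_bigr => i _.
  rewrite (bigD1 i) //= shift_mono_id eqxx big1 ?mulr1 ?addr0 // => j ji.
  by rewrite shift_mono_eq eq_sym (negbTE ji) mulr0.
apply/is_diag_mxP => k l kl; have {}kl : k != l := kl.
move: (coef0 (U_(l) + (mono - U_(k)))%MM).
rewrite mcoeff0 (bigD1 k) //= [X in _ + X]big1 => [|i ik]; last first.
  by rewrite big1 // => j _; rewrite shift_mono_inj // (negbTE ik) mulr0.
rewrite (bigD1 l) //= big1 => [|j jl]; last first.
  by rewrite shift_mono_inj // (negbTE jl) andbF mulr0.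
rewrite shift_mono_inj // !eqxx mulr1 !addr0 => /eqP.
by rewrite mulf_eq0 (negbTE (alpha_neq0 k)) orbF => /eqP.
Qed.

End Monomial.

Section Conjugation.
Variables (F : fieldType) (n : nat) (V : 'M[F]_n).

Lemma conjmx_is_linear : linear (conjmx V).
Proof.
by move=> a M N; rewrite /conjmx mulmxDr mulmxDl -scalemxAr -scalemxAl.
Qed.

HB.instance Definition _ := GRing.isLinear.Build F 'M[F]_n 'M[F]_n _
  (conjmx V) conjmx_is_linear.

Hypothesis V_unit : V \in unitmx.

Lemma conjmxMu M N : conjmx V (M *m N) = conjmx V M *m conjmx V N.
Proof. by rewrite conjmxM // inE stablemx_unit. Qed.

Lemma conjmx_inj : injective (conjmx V).
Proof. by move=> M N /(congr1 (conjmx (invmx V))); rewrite !conjmxK. Qed.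

Lemma conjmx_commute M N :
  conjmx V M *m conjmx V N = conjmx V N *m conjmx V M <-> M *m N = N *m M.
Proof. by rewrite -!conjmxMu; split => [/conjmx_inj|->]. Qed.

Lemma mxtrace_conjmx M : \tr (conjmx V M) = \tr M.
Proof. by rewrite conjumx // mxtrace_mulC mulmxA mulVmx ?mul1mx. Qed.

End Conjugation.

Lemma is_diag_mx_comm (R : comNzRingType) n (X Y : 'M[R]_n) :
  is_diag_mx X -> is_diag_mx Y -> X *m Y = Y *m X.
Proof. by move=> /diag_mxP[d ->] /diag_mxP[e ->]; exact: diag_mxC. Qed.

Lemma comm_diag_mx_entry (R : comNzRingType) n (v : 'rV[R]_n) (X : 'M[R]_n)
    i j :
  diag_mx v *m X = X *m diag_mx v -> (v 0 i - v 0 j) * X i j = 0.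
Proof.
move=> /matrixP/(_ i j); rewrite mul_diag_mx mul_mx_diag !mxE => vX.
by rewrite mulrBl vX mulrC subrr.
Qed.

Section Centralizer.
Variables (K : fieldType) (n : nat) (alpha : 'I_n -> nat) (A : 'M[K]_n).
Variable g : 'M[K]_(n * n).
Hypothesis char0 : [pchar K] =i pred0.
Hypothesis alpha_gt0 : forall i, (0 < alpha i)%N.
Hypothesis A_unit : A \in unitmx.
Let w : 'rV[K]_n := \row_i (alpha i)%:R.
Let D := diag_mx w.
Hypothesis gP : forall M,
  (M \in g)%MS = is_diag_mx (conjmx A M) && (\tr (conjmx A M *m D) == 0).
Let H := conjmx (invmx A) D.
Let invA_unit : invmx A \in unitmx. Proof. by rewrite unitmx_inv. Qed.

Lemma weightD_neq0 i j : w 0 i + w 0 j != 0.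
Proof.
by rewrite !mxE -natrD (pcharf0P K).1 // addn_eq0 negb_and -lt0n alpha_gt0.
Qed.

Lemma sum_weights_neq0 (k : 'I_n) : \sum_i w 0 i != 0.
Proof.
under eq_bigr do rewrite mxE.
rewrite -natr_sum (pcharf0P K).1 // (bigD1 k) //=.
by rewrite addn_eq0 negb_and -lt0n alpha_gt0.
Qed.

Lemma mxtrace_weights_sqr_neq0 (k : 'I_n) : \tr (D *m D) != 0.
Proof.
rewrite mxtrace_mul_diag; under eq_bigr do rewrite !mxE eqxx mulr1n -natrM.
rewrite -natr_sum (pcharf0P K).1 // (bigD1 k) //=.
by rewrite addn_eq0 muln_eq0 orbb negb_and -lt0n alpha_gt0.
Qed.

Lemma conjVmx_mem X :
  (conjmx (invmx A) X \in g)%MS = is_diag_mx X && (\tr (X *m D) == 0).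
Proof. by rewrite gP conjmxVK. Qed.

(* The diagonal of alpha_j E_ii - alpha_i E_jj; its entries at i and j differ
   by alpha_i + alpha_j <> 0, which forces centralizing matrices to be
   diagonal. *)
Definition pair_weight i j : 'rV[K]_n :=
  \row_k (if k == i then w 0 j else if k == j then - w 0 i else 0).

Lemma mxtrace_mul_pair_weight (X : 'M[K]_n) i j : i != j ->
  \tr (X *m diag_mx (pair_weight i j)) = X i i * w 0 j - X j j * w 0 i.
Proof.
move=> ij; rewrite mxtrace_mul_diag (bigD1 i) // (bigD1 j) 1?eq_sym //=.
rewrite big1 => [|k /andP[ki kj]]; last first.
  by rewrite mxE (negbTE ki) (negbTE kj) mulr0.
by rewrite !mxE eqxx eq_sym (negbTE ij) eqxx addr0 mulrN.
Qed.

Lemma pair_weight_mem i j : i != j ->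
  (conjmx (invmx A) (diag_mx (pair_weight i j)) \in g)%MS.
Proof.
move=> ij; rewrite conjVmx_mem diag_mx_is_diag mxtrace_mulC.
by rewrite mxtrace_mul_pair_weight // !mxE !eqxx !mulr1n mulrC subrr eqxx.
Qed.

Lemma cent_gE W : (W \in 'C(g))%MS = is_diag_mx (conjmx A W).
Proof.
apply/cent_mxP/is_diag_mxP => [W_cent i j ij | /is_diag_mxP W_diag M].
  have {}ij : i != j := ij.
  move/(conjmx_commute A_unit): (W_cent _ (pair_weight_mem ij)).
  rewrite conjmxVK // => /(comm_diag_mx_entry i j)/eqP.
  rewrite [pair_weight i j 0 i]mxE [pair_weight i j 0 j]mxE !eqxx ifN_eqC //.
  by rewrite opprK addrC mulf_eq0 (negbTE (weightD_neq0 _ _)) => /eqP.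
rewrite gP => /andP[M_diag _].
by apply/(conjmx_commute A_unit); rewrite (is_diag_mx_comm M_diag W_diag).
Qed.

Let diag_basis : 'M[K]_(n, n * n) :=
  \matrix_k mxvec (conjmx (invmx A) (delta_mx k k)).

Lemma mul_diag_basis v :
  v *m diag_basis = mxvec (conjmx (invmx A) (diag_mx v)).
Proof.
rewrite mulmx_sum_row diag_mx_sum_delta !linear_sum; apply: eq_bigr => k _.
by rewrite rowK !linearZ.
Qed.

Lemma diag_basis_free : row_free diag_basis.
Proof.
rewrite -kermx_eq0; apply/rowV0P => v /sub_kermxP/eqP.
rewrite mul_diag_basis mxvec_eq0 -(conjmx0 (invmx A)) => /eqP.
move=> /(conjmx_inj invA_unit)/matrixP v0; apply/rowP => k.
by have := v0 k k; rewrite !mxE eqxx mulr1n.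
Qed.

Lemma cent_g_eq_diag_basis : ('C(g) == diag_basis)%MS.
Proof.
apply/andP; split; apply/rV_subP => v.
  rewrite -[v]vec_mxK cent_gE => /diag_mxP[d v_conj].
  by rewrite -[vec_mx v](conjmxK _ A_unit) v_conj -mul_diag_basis submxMl.
case/submxP => u ->.
by rewrite mul_diag_basis cent_gE conjmxVK // diag_mx_is_diag.
Qed.

Lemma rank_cent_g : \rank 'C(g) = n.
Proof.
by rewrite (eqmx_rank cent_g_eq_diag_basis); apply/eqP/diag_basis_free.
Qed.

Lemma g_sub_cent : (g <= 'C(g))%MS.
Proof. by apply/rV_subP => v; rewrite -[v]vec_mxK gP cent_gE => /andP[]. Qed.

Lemma H_cent : (H \in 'C(g))%MS.
Proof. by rewrite cent_gE conjmxVK // diag_mx_is_diag. Qed.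

Lemma mxtrace_H : \tr H = (\sum_(i < n) alpha i)%N%:R.
Proof.
rewrite mxtrace_conjmx // mxtrace_diag natr_sum.
by apply: eq_bigr => i _; rewrite mxE.
Qed.

Lemma mxtrace_H_mul M : (M \in g)%MS -> \tr (H *m M) = 0.
Proof.
rewrite gP => /andP[_ /eqP trace0].
by rewrite -(mxtrace_conjmx A_unit) conjmxMu // conjmxVK // mxtrace_mulC.
Qed.

Lemma H_unique H' :
  (H' \in 'C(g))%MS -> \tr H' = (\sum_(i < n) alpha i)%N%:R ->
  (forall M, (M \in g)%MS -> \tr (H' *m M) = 0) -> H' = H.
Proof.
rewrite cent_gE => /diag_mxP[x H'_conj] trH' H'_orth.
have x_prop i j : x 0 i * w 0 j = x 0 j * w 0 i.
  have [<-//|ij] := eqVneq i j; move: (H'_orth _ (pair_weight_mem ij)).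
  rewrite -(mxtrace_conjmx A_unit) conjmxMu // conjmxVK // H'_conj.
  rewrite mxtrace_mul_pair_weight // !mxE !eqxx !mulr1n => /eqP.
  by rewrite subr_eq0 => /eqP.
have sum_x : \sum_i x 0 i = \sum_i w 0 i.
  rewrite -mxtrace_diag -H'_conj mxtrace_conjmx // trH' natr_sum.
  by apply: eq_bigr => i _; rewrite mxE.
suff x_w : x = w by rewrite -[H'](conjmxK _ A_unit) H'_conj x_w.
apply/rowP => k; apply: (mulIf (sum_weights_neq0 k)).
rewrite -[in RHS]sum_x !mulr_sumr; apply: eq_bigr => i _.
by rewrite x_prop mulrC.
Qed.

Lemma scale_H_eq0 c : c * \tr (D *m D) = 0 -> c *: H = 0.
Proof.
move=> /eqP cDD0; apply/matrixP => i j; move: cDD0.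
rewrite mulf_eq0 (negbTE (mxtrace_weights_sqr_neq0 i)) orbF => /eqP->.
by rewrite scale0r.
Qed.

Lemma mxdirect_g_H : mxdirect (g + mxvec H).
Proof.
apply/mxdirect_addsP/eqP/rowV0P => v; rewrite sub_capmx.
move=> /andP[v_g /sub_rVP[c v_H]]; move: v_g; rewrite v_H -linearZ /=.
rewrite -[c *: H]linearZ /= conjVmx_mem => /andP[_ /eqP].
rewrite -scalemxAl mxtraceZ => /scale_H_eq0.
by rewrite linearZ /= => ->; rewrite linear0.
Qed.

Lemma cent_g_sub_addsH : ('C(g) <= g + mxvec H)%MS.
Proof.
apply/rV_subP => v; rewrite -[v]vec_mxK cent_gE; set W := vec_mx v.
move=> /diag_mxP[x W_conj]; set c := \tr (diag_mx x *m D) / \tr (D *m D).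
have -> : W = conjmx (invmx A) (diag_mx (x - c *: w)) + c *: H.
  by rewrite !linearB !linearZ /= -/D -/H scalerN addrNK -W_conj conjmxK.
rewrite linearD /=; apply: addmx_sub_adds; last by rewrite linearZ scalemx_sub.
rewrite conjVmx_mem diag_mx_is_diag /= linearB linearZ /= mulmxBl -scalemxAl.
rewrite linearB linearZ /= subr_eq0 /c; apply/eqP.
(* If tr(D D) = 0 then n = 0, so both traces are empty sums. *)
have [DD0|DD_neq0] := eqVneq (\tr (D *m D)) 0; last by rewrite divfK.
rewrite DD0 mulr0 mxtrace_mul_diag big1 // => i _.
by move: (mxtrace_weights_sqr_neq0 i); rewrite DD0 eqxx.
Qed.

Lemma cent_g_eq_addsH : ('C(g) == g + mxvec H)%MS.
Proof. by rewrite cent_g_sub_addsH /= addsmx_sub g_sub_cent H_cent. Qed.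

End Centralizer.

Theorem proposition6 (K : fieldType) (n : nat) (alpha : 'I_n -> nat)
    (A : 'M[K]_n) :
  [pchar K] =i pred0 ->
  (forall i, 0 < alpha i)%N ->
  A \in unitmx ->
  let m : {mpoly K[n]} := 'X_[ [multinom alpha i | i < n] ] in
  let d : nat := (\sum_(i < n) alpha i)%N in
  let f : {mpoly K[n]} :=
    m \mPo [tuple \sum_(j < n) A i j *: 'X_j | i < n] in
  let g := lie_alg f in
  let C := 'C(g)%MS in
  \rank C = n /\
  exists H : 'M[K]_n,
    [/\ (H \in C)%MS, \tr H = d%:R & forall M, (M \in g)%MS -> \tr (H *m M) = 0]
    /\ (forall H' : 'M[K]_n,
          [/\ (H' \in C)%MS, \tr H' = d%:R
            & forall M, (M \in g)%MS -> \tr (H' *m M) = 0] -> H' = H)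
    /\ (exists P : 'M[K]_n, P \in unitmx /\
          P *m H *m invmx P = diag_mx (\row_i (alpha i)%:R))
    /\ (C == g + mxvec H)%MS /\ mxdirect (g + mxvec H).
Proof.
move=> char0 alpha_gt0 A_unit m d f g C; rewrite {}/d {}/C.
have gP M : (M \in g)%MS = is_diag_mx (conjmx A M) &&
    (\tr (conjmx A M *m diag_mx (\row_i (alpha i)%:R)) == 0).
  by rewrite lie_alg_comp_lin_forms // lie_op_monomial_eq0.
split; first exact: rank_cent_g char0 alpha_gt0 A_unit gP.
exists (conjmx (invmx A) (diag_mx (\row_i (alpha i)%:R))); split.
  split; [exact: H_cent char0 alpha_gt0 A_unit gP | exact: mxtrace_H |].
  exact: mxtrace_H_mul gP.
split.
  move=> H' [H'_cent trH' H'_orth].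
  exact (H_unique char0 alpha_gt0 A_unit gP H'_cent trH' H'_orth).
split; first by exists A; rewrite -conjumx // conjmxVK.
split; first exact: cent_g_eq_addsH char0 alpha_gt0 A_unit gP.
exact: mxdirect_g_H char0 alpha_gt0 A_unit gP.
Qed.
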